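(* Let $n\ge2$, let $Q$ be an $n$-pre-admissible quiver, $\mathbf{k}$ a field and $\Lambda=\mathbf{k}Q/\mathcal{J}^2$ ($\mathcal{J}$ the arrow ideal). Then: (a) $\Lambda$ is a string algebra. (b) If $\ell_k\cdots\ell_1$ is a string in $\Lambda$, then $k\le2$; in particular there are no bands in $\Lambda$. (c) $\Lambda$ is representation-finite. (d) If $M$ is an indecomposable $\Lambda$-module which is not simple, then $M$ is projective or injective.
   Context: Quivers are finite and connected; modules are finite-dimensional right modules. $\delta(v)=(\delta^-(v),\delta^+(v))$ counts arrows ending and starting at $v$. $Q$ is $n$-pre-admissible if: (i) every $\delta(v)\in\{(0,0),(0,1),(1,0),(1,1),(1,2),(2,1)\}$, with $(2,2)$ also allowed when $n=2$; (ii) at most one arrow from any vertex to any vertex; (iii) $\delta^+(v)+\delta^-(u)\le 3$ for every arrow $v\to u$. A bound quiver algebra $\mathbf{k}Q/\mathcal{I}$ is a string algebra if: each vertex has at most two incoming and at most two outgoing arrows; for every arrow $\alpha$ there is at most one arrow $\beta$ with $\beta\alpha\notin\mathcal{I}$ and at most one arrow $\gamma$ with $\alpha\gamma\notin\mathcal{I}$; and $\mathcal{I}$ is generated by paths. For each arrow $\alpha$ introduce a formal inverse $\alpha^-$ with $s(\alpha^-)=t(\alpha)$, $t(\alpha^-)=s(\alpha)$. A string of length $k\ge1$ is a sequence $\ell_k\cdots\ell_1$ of arrows and inverse arrows with $t(\ell_i)=s(\ell_{i+1})$, $\ell_i\ne\ell_{i+1}^-$, such that no subword $\ell_{i+r}\cdots\ell_i$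 consisting of direct arrows, nor the inverse $\ell_i^-\cdots\ell_{i+r}^-$ of a subword consisting of inverse arrows, lies in $\mathcal{I}$; there are also trivial strings of length $0$ at each vertex. A band is a string $\bm\ell$ with $s(\ell_1)=t(\ell_k)$ such that every power $\bm\ell^q$ is a string and $\bm\ell$ is not a proper power of another string. *)

From HB Require Import structures.
From mathcomp Require Import all_boot all_order all_algebra.
Set Implicit Arguments. Unset Strict Implicit. Unset Printing Implicit Defensive.
Import GRing.Theory.
Local Open Scope ring_scope.

Record quiver := Quiver {
  qV : finType;
  qA : finType;
  qs : qA -> qV;
  qt : qA -> qV
}.

Section QuiverDefs.
Variable Q : quiver.

Definition indeg (v : qV Q) : nat := #|[pred a : qA Q | qt a == v]|.
Definition outdeg (v : qV Q) : nat := #|[pred a : qA Q | qs a == v]|.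

Definition adj : rel (qV Q) :=
  fun x y => [exists a : qA Q, ((qs a == x) && (qt a == y))
                              || ((qs a == y) && (qt a == x))].
Definition connected_quiver : Prop := forall u v : qV Q, connect adj u v.

Definition pre_admissible (n : nat) : Prop :=
  [/\ (forall v : qV Q,
          ((indeg v, outdeg v) \in
             [:: (0,0); (0,1); (1,0); (1,1); (1,2); (2,1)]%N)
          \/ (n = 2%N /\ (indeg v, outdeg v) = (2%N, 2%N))),
      (forall a b : qA Q, qs a = qs b -> qt a = qt b -> a = b) &
      (forall a : qA Q, (outdeg (qs a) + indeg (qt a) <= 3)%N)].

(* ---------- Paths and (monomial) ideals ----------
   A path is a sequence of arrows listed in traversal order (first arrow first).
   An ideal generated by paths is modelled by the set I of paths it contains;
   for [a; b] (a then b) this is the element written "b a" in the paper. *)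
Definition is_path (p : seq (qA Q)) : bool :=
  sorted (fun a b => qt a == qs b) p.

(* the set of paths lying in J^2, J the arrow ideal *)
Definition J2 (p : seq (qA Q)) : bool := (2 <= size p)%N.

Definition string_algebra (I : seq (qA Q) -> bool) : Prop :=
  [/\
      (forall p q r, is_path (p ++ q ++ r) -> I q -> I (p ++ q ++ r)),
      (forall v : qV Q, (indeg v <= 2)%N /\ (outdeg v <= 2)%N),
      (forall a : qA Q,
          #|[pred b : qA Q | (qs b == qt a) && ~~ I [:: a; b]]| <= 1)%N &
      (forall a : qA Q,
          #|[pred c : qA Q | (qt c == qs a) && ~~ I [:: c; a]]| <= 1)%N].

(* ---------- Strings and bands ----------
   A letter (a, true) is the arrow a, (a, false) its formal inverse a^-.
   A string l_k ... l_1 is stored as the sequence [:: l_1; ...; l_k]. *)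
Definition letter := (qA Q * bool)%type.
Definition lsrc (x : letter) : qV Q := if x.2 then qs x.1 else qt x.1.
Definition ltgt (x : letter) : qV Q := if x.2 then qt x.1 else qs x.1.

Definition is_string (I : seq (qA Q) -> bool) (w : seq letter) : Prop :=
  [/\ w <> [::],
      sorted (fun x y => ltgt x == lsrc y) w,
      sorted (fun x y => x != (y.1, ~~ y.2)) w &
      forall i r : nat, (i + r < size w)%N ->
        let u := take r.+1 (drop i w) in
        (all (fun x => x.2) u -> ~~ I (map fst u)) /\
        (all (fun x => ~~ x.2) u -> ~~ I (rev (map fst u)))].

Definition is_band (I : seq (qA Q) -> bool) (w : seq letter) : Prop :=
  [/\ is_string I w,
      (exists x w', w = x :: w' /\ lsrc x = ltgt (last x w')),
      (forall q : nat, (0 < q)%N -> is_string I (flatten (nseq q w))) &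
      ~ (exists (u : seq letter) (q : nat),
            [/\ (1 < q)%N, is_string I u & w = flatten (nseq q u)])].

End QuiverDefs.

(* ---------- Finite-dimensional right modules over Lambda = kQ/J^2 ----------
   Lambda is presented by the idempotents e_v and the arrows a, with
   e_v e_w = delta_{vw} e_v, sum_v e_v = 1, a = e_{t a} a e_{s a},
   and a b = 0 for all arrows a, b (all paths of length 2 lie in J^2).
   A right module of dimension d is K^d (row vectors) with the generators
   acting by right multiplication by d x d matrices. *)
Record rmod (Q : quiver) (K : fieldType) := RMod {
  rdim : nat;
  rE : qV Q -> 'M[K]_rdim;
  rX : qA Q -> 'M[K]_rdim;
  rE_mul : forall v w, rE v *m rE w = if v == w then rE v else 0;
  rE_sum : \sum_(v : qV Q) rE v = 1%:M;
  rX_idem : forall a, rX a = rE (qt a) *m rX a *m rE (qs a);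
  rX_J2 : forall a b, rX a *m rX b = 0
}.

Section Modules.
Variables (Q : quiver) (K : fieldType).
Implicit Types M N : rmod Q K.

Definition is_hom M N (f : 'M[K]_(rdim M, rdim N)) : Prop :=
  (forall v, rE M v *m f = f *m rE N v) /\ (forall a, rX M a *m f = f *m rX N a).

Definition iso M N : Prop :=
  exists (f : 'M[K]_(rdim M, rdim N)) (g : 'M[K]_(rdim N, rdim M)),
    [/\ is_hom f, is_hom g, f *m g = 1%:M & g *m f = 1%:M].

(* submodule given by the row space of U *)
Definition stable M (U : 'M[K]_(rdim M)) : Prop :=
  (forall v, (U *m rE M v <= U)%MS) /\ (forall a, (U *m rX M a <= U)%MS).
Arguments stable : clear implicits.

Definition simple_mod M : Prop :=
  (0 < rdim M)%N /\ forall U, stable M U -> U = 0 \/ row_full U.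

Definition indecomposable M : Prop :=
  (0 < rdim M)%N /\
  forall U W : 'M[K]_(rdim M), stable M U -> stable M W ->
    (U :&: W <= (0 : 'M[K]_(rdim M)))%MS -> row_full (U + W)%MS ->
    U = 0 \/ W = 0.

Definition projective_mod M : Prop :=
  forall (B C : rmod Q K) (g : 'M[K]_(rdim B, rdim C)) (f : 'M[K]_(rdim M, rdim C)),
    is_hom g -> row_full g -> is_hom f ->
    exists h : 'M[K]_(rdim M, rdim B), is_hom h /\ h *m g = f.

Definition injective_mod M : Prop :=
  forall (B C : rmod Q K) (i : 'M[K]_(rdim B, rdim C)) (f : 'M[K]_(rdim B, rdim M)),
    is_hom i -> row_free i -> is_hom f ->
    exists h : 'M[K]_(rdim C, rdim M), is_hom h /\ i *m h = f.

Definition rep_finite : Prop :=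
  exists (m : nat) (F : 'I_m -> rmod Q K),
    forall M, indecomposable M -> exists i, iso M (F i).

End Modules.

From mathcomp Require Import all_boot all_order all_algebra.
From mathcomp Require Import zify.
Set Implicit Arguments. Unset Strict Implicit. Unset Printing Implicit Defensive.
Import GRing.Theory.
Local Open Scope ring_scope.

(* Every path of length two lies in J^2, so the letters of a string alternate
   in direction; a string of length three would therefore give an arrow [b]
   with two arrows ending at [t b] and two starting at [s b], which
   pre-admissibility forbids.

   On a module, an arrow [a] maps [M e_(t a)] to [M e_(s a)] and any two arrows
   compose to zero.  An indecomposable [M] on which all arrows vanish is simple.
   Otherwise take [x] in [M e_u], [u = t a], with [y = x a] nonzero, and let
   [w = s a].  If a second arrow [b] ends at [u], then no other arrow starts at
   [w] or [s b], and [M] is [I(w)] or [P(u)] according as [x] lies in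
   [ker a + ker b] or not.  If [a] is the only arrow ending at [u], then [M] is
   [I(w)] if [y] lies in the image of another arrow starting at [w], and [P(u)]
   otherwise.  In each case a separating functional yields an epimorphism
   [M -> P(u)], or [y] with suitable preimages yields a monomorphism
   [I(w) -> M]; it splits because [P(u)] is projective and [I(w)] injective. *)

Section LinearAlgebra.
Variable F : fieldType.

Lemma separating_functional p d (S : 'M[F]_(p, d)) (y : 'rV_d) :
  ~~ (y <= S)%MS -> exists l : 'cV_d, S *m l = 0 /\ y *m l = 1%:M.
Proof.
rewrite submxE; set v := y *m _ => /rV0Pn [j vj].
exists (cokermx S *m ((v 0 j)^-1 *: delta_mx j 0)).
rewrite mulmxA mulmx_coker mul0mx mulmxA -scalemxAr -colE; split=> //.
have -> : col j v = (v 0 j)%:M by apply/matrixP => i k; rewrite !ord1 !mxE.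
by rewrite scale_scalar_mx mulVf.
Qed.

Lemma col_solvable p d (A : 'M[F]_(p, d)) (t : 'cV_p) :
  (forall m : 'rV_p, m *m A = 0 -> m *m t = 0) -> exists l : 'cV_d, A *m l = t.
Proof.
move=> kerAt; set C := (cokermx A^T)^T.
have CA : C *m A = 0 by rewrite -[A]trmxK -trmx_mul mulmx_coker trmx0.
have Ct : C *m t = 0.
  by apply/row_matrixP => i; rewrite row_mul row0 kerAt // -row_mul CA row0.
have : (t^T <= A^T)%MS by rewrite submxE -[_ *m _]trmxK trmx_mul trmxK Ct trmx0.
by case/submxP => D tD; exists D^T; rewrite -[t]trmxK tD trmx_mul trmxK.
Qed.

Lemma mx11_mul_submx m n (c : 'M[F]_1) (y : 'rV_n) (A : 'M_(m, n)) :
  c != 0 -> (c *m y <= A)%MS = (y <= A)%MS.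
Proof.
rewrite [c]mx11_scalar mul_scalar_mx => c0; rewrite eqmx_scale //.
by apply: contraNneq c0 => ->; rewrite raddf0.
Qed.

Lemma mx11_mul_eq0 n (c : 'M[F]_1) (y : 'rV_n) : y != 0 -> (c *m y == 0) = (c == 0).
Proof.
move=> y0; rewrite [c]mx11_scalar mul_scalar_mx scaler_eq0 (negbTE y0) orbF.
by apply/eqP/eqP => [->|/matrixP/(_ 0 0)]; rewrite ?raddf0 // !mxE.
Qed.

End LinearAlgebra.

Section Modules.
Variables (Q : quiver) (K : fieldType).
Implicit Types M N P : rmod Q K.

Lemma hom_mul M N P (f : 'M[K]_(rdim M, rdim N)) (g : 'M[K]_(rdim N, rdim P)) :
  is_hom f -> is_hom g -> is_hom (f *m g).
Proof.
move=> [fE fX] [gE gX]; split=> [v|a]; first by rewrite mulmxA fE -mulmxA gE mulmxA.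
by rewrite mulmxA fX -mulmxA gX mulmxA.
Qed.

Lemma hom_one M : is_hom (1%:M : 'M[K]_(rdim M)).
Proof. by split=> [v|a]; rewrite mulmx1 mul1mx. Qed.

Lemma hom_stable M (f : 'M[K]_(rdim M)) : is_hom f -> stable f.
Proof. by move=> [fE fX]; split=> [v|a]; rewrite -?fE -?fX submxMl. Qed.

Lemma indecomposable_idempotent M (e : 'M[K]_(rdim M)) :
  indecomposable M -> is_hom e -> e *m e = e -> e = 0 \/ e = 1%:M.
Proof.
move=> [_ Mi] he ee.
have he' : is_hom (1%:M - e).
  by split=> [v|a]; rewrite mulmxBl mulmxBr mul1mx mulmx1 ?he.1 ?he.2.
have cap0 : (e :&: (1%:M - e) <= (0 : 'M_(rdim M)))%MS.
  have /submxP [D1 zD1] := capmxSl e (1%:M - e).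
  have /submxP [D2 zD2] := capmxSr e (1%:M - e).
  have ze : (e :&: (1%:M - e))%MS *m e = 0.
    by rewrite zD2 -mulmxA mulmxBl mul1mx ee subrr mulmx0.
  by rewrite submx0 -ze zD1 -mulmxA ee.
have full : row_full (e + (1%:M - e))%MS.
  by rewrite -sub1mx -{1}(subrKC e 1%:M) addmx_sub_adds.
have [->|/eqP] := Mi _ _ (hom_stable he) (hom_stable he') cap0 full; first by left.
by rewrite subr_eq0 => /eqP <-; right.
Qed.

Lemma indecomposable_retract_iso M N (r : 'M[K]_(rdim M, rdim N)) (s : 'M[K]_(rdim N, rdim M)) :
  indecomposable M -> (0 < rdim N)%N -> is_hom r -> is_hom s -> s *m r = 1%:M -> iso M N.
Proof.
move=> Mi N_gt0 hr hs sr.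
have rsrs : r *m s *m (r *m s) = r *m s by rewrite mulmxA -(mulmxA r) sr mulmx1.
have [rs0|rs1] := indecomposable_idempotent Mi (hom_mul hr hs) rsrs; last by exists r, s.
have : s *m (r *m s) *m r = 1%:M by rewrite mulmxA sr mul1mx sr.
by rewrite rs0 mulmx0 mul0mx => /esym/eqP; rewrite -mxrank_eq0 mxrank1 (gtn_eqF N_gt0).
Qed.

Lemma iso_rdim M N : iso M N -> rdim M = rdim N.
Proof.
move=> [f [g [_ _ fg gf]]]; apply/eqP; rewrite eqn_leq.
have := mxrankM_maxl f g; have := mxrankM_maxl g f; rewrite fg gf !mxrank1 => gfl fgl.
by rewrite (leq_trans fgl (rank_leq_col f)) (leq_trans gfl (rank_leq_col g)).
Qed.

Lemma rdim1_simple M : rdim M = 1%N -> simple_mod M.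
Proof.
move=> M1; split=> [|U _]; first by rewrite M1.
have [->|U0] := eqVneq U 0; [by left | right].
rewrite /row_full eqn_leq rank_leq_col (@leq_trans 1%N) // ?M1 //.
by rewrite lt0n mxrank_eq0.
Qed.

Lemma iso_projective M N : iso M N -> projective_mod N -> projective_mod M.
Proof.
move=> [f [g [hf hg fg _]]] projN B C h k hh h_full hk.
have [l [hl lh]] := projN B C h (g *m k) hh h_full (hom_mul hg hk).
by exists (f *m l); split; [exact: hom_mul | rewrite -mulmxA lh mulmxA fg mul1mx].
Qed.

Lemma iso_injective M N : iso M N -> injective_mod N -> injective_mod M.
Proof.
move=> [f [g [hf hg fg _]]] injN B C i k hi i_free hk.
have [l [hl il]] := injN B C i (k *m f) hi i_free (hom_mul hk hf).
by exists (l *m g); split; [exact: hom_mul | rewrite mulmxA il -mulmxA fg mulmx1].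
Qed.

Lemma row_rE_at M (x : 'rV[K]_(rdim M)) u v :
  x *m rE M u = x -> x *m rE M v = (u == v)%:R *: x.
Proof.
move=> xu; rewrite -{1}xu -mulmxA rE_mul.
by case: eqP; rewrite ?scale1r ?scale0r ?xu ?mulmx0.
Qed.

Lemma col_rE_at M (y : 'cV[K]_(rdim M)) u v :
  rE M u *m y = y -> rE M v *m y = (u == v)%:R *: y.
Proof.
move=> uy; rewrite -{1}uy mulmxA rE_mul eq_sym.
by case: eqP => [<-|]; rewrite ?scale1r ?scale0r ?uy ?mul0mx.
Qed.

Lemma rE_idem M v : rE M v *m rE M v = rE M v.
Proof. by rewrite rE_mul eqxx. Qed.

Lemma rX_rE M a v : rX M a *m rE M v = (qs a == v)%:R *: rX M a.
Proof.
rewrite [in LHS](rX_idem M a) -mulmxA rE_mul.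
by case: eqP; rewrite ?scale1r ?scale0r -?rX_idem ?mulmx0.
Qed.

Lemma rE_rX M a v : rE M v *m rX M a = (qt a == v)%:R *: rX M a.
Proof.
rewrite [in LHS](rX_idem M a) !mulmxA rE_mul eq_sym.
by case: eqP => [<-|]; rewrite ?scale1r ?scale0r -?rX_idem ?mul0mx.
Qed.

Lemma rX_rE_src M a : rX M a *m rE M (qs a) = rX M a.
Proof. by rewrite rX_rE eqxx scale1r. Qed.

Lemma rE_tgt_rX M a : rE M (qt a) *m rX M a = rX M a.
Proof. by rewrite rE_rX eqxx scale1r. Qed.

Lemma row_rX_at_src M (z : 'rV[K]_(rdim M)) a : z *m rX M a *m rE M (qs a) = z *m rX M a.
Proof. by rewrite -mulmxA rX_rE_src. Qed.

Lemma row_rX_rX M (z : 'rV[K]_(rdim M)) a d : z *m rX M a *m rX M d = 0.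
Proof. by rewrite -mulmxA rX_J2 mulmx0. Qed.

Lemma row_at_rX M v (z : 'rV[K]_(rdim M)) d :
  z *m rE M v = z -> z *m rX M d = (qt d == v)%:R *: (z *m rX M d).
Proof. by move=> zv; rewrite -{1}zv -mulmxA rE_rX -scalemxAr. Qed.

Lemma row_at_rX_unique M v (z : 'rV[K]_(rdim M)) a d :
  z *m rE M v = z -> (forall b, qt b = v -> b = a) ->
  z *m rX M d = (d == a)%:R *: (z *m rX M a).
Proof.
move=> zv in_a; have [dv|dv] := eqVneq (qt d) v; first by rewrite (in_a d dv) eqxx scale1r.
rewrite (row_at_rX d zv) (negbTE dv) scale0r.
have [da|_] := eqVneq d a; last by rewrite scale0r.
by rewrite (row_at_rX a zv) -da (negbTE dv) scale0r scaler0.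
Qed.

End Modules.

Section BasisVectors.
Variables (K : fieldType) (B : finType).

Definition brow (e : B) : 'rV[K]_#|B| := delta_mx 0 (enum_rank e).
Definition bcol (e : B) : 'cV[K]_#|B| := delta_mx (enum_rank e) 0.

Lemma basis_rowP d (X Y : 'M[K]_(#|B|, d)) : (forall e, brow e *m X = brow e *m Y) -> X = Y.
Proof.
move=> XY; apply/row_matrixP => i; rewrite !rowE.
by have := XY (enum_val i); rewrite /brow enum_valK.
Qed.

Lemma basis_colP d (X Y : 'M[K]_(d, #|B|)) : (forall e, X *m bcol e = Y *m bcol e) -> X = Y.
Proof.
move=> XY; apply/matrixP => i j.
by have := XY (enum_val j); rewrite /bcol enum_valK -!colE => /matrixP /(_ i 0); rewrite !mxE.
Qed.

Lemma brow_bcol e e' : brow e *m bcol e' = (e == e')%:R%:M.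
Proof.
apply/matrixP => i j; rewrite /brow /bcol !ord1 !mxE (bigD1 (enum_rank e)) //= big1 => [|k ke].
  by rewrite !mxE !eqxx mul1r addr0 (inj_eq enum_rank_inj) andbT mulr1n.
by rewrite !mxE (negbTE ke) andbF mul0r.
Qed.

Lemma row_expand_basis (v : 'rV[K]_#|B|) : v = \sum_e (v *m bcol e) *m brow e.
Proof.
apply: basis_colP => e; rewrite mulmx_suml (bigD1 e) //= big1 => [|e' e'e].
  by rewrite -mulmxA brow_bcol eqxx mulmx1 addr0.
by rewrite -mulmxA brow_bcol (negbTE e'e) mul_mx_scalar scale0r.
Qed.

Lemma row_full_basis m (A : 'M[K]_(m, #|B|)) : (forall e, (brow e <= A)%MS) -> row_full A.
Proof.
move=> rowsA; rewrite -sub1mx; apply/row_subP => i.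
by have := rowsA (enum_val i); rewrite /brow enum_valK rowE mulmx1.
Qed.

Definition rows_mx d (F : B -> 'rV[K]_d) : 'M[K]_(#|B|, d) :=
  \matrix_(i, j) F (enum_val i) 0 j.
Definition cols_mx d (G : B -> 'cV[K]_d) : 'M[K]_(d, #|B|) :=
  \matrix_(i, j) G (enum_val j) i 0.

Lemma brow_rows_mx d (F : B -> 'rV[K]_d) e : brow e *m rows_mx F = F e.
Proof. by rewrite /brow -rowE; apply/rowP => j; rewrite !mxE enum_rankK. Qed.

Lemma cols_mx_bcol d (G : B -> 'cV[K]_d) e : cols_mx G *m bcol e = G e.
Proof. by rewrite /bcol -colE; apply/colP => j; rewrite !mxE enum_rankK. Qed.

Lemma rows_mx_mul_cols_mx d (F : B -> 'rV[K]_d) (G : B -> 'cV[K]_d) :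
  (forall e e', F e *m G e' = (e == e')%:R%:M) -> rows_mx F *m cols_mx G = 1%:M.
Proof.
move=> FG; apply: basis_rowP => e; apply: basis_colP => e'.
by rewrite mulmxA brow_rows_mx -mulmxA cols_mx_bcol FG mulmx1 brow_bcol.
Qed.

End BasisVectors.

Arguments brow {K B}.
Arguments bcol {K B}.

(* The module with basis [B] in which the basis vector [e] lies at the vertex
   [lab e] and the arrow [a] sends [e] to [act a e] (or to 0); [coact] is the
   transposed action. *)
Section BasisModule.
Variables (Q : quiver) (K : fieldType) (B : finType) (lab : B -> qV Q)
  (act coact : qA Q -> B -> option B).
Hypothesis act_coact : forall a e e', (act a e == Some e') = (coact a e' == Some e).
Hypothesis act_lab : forall a e e', act a e = Some e' -> lab e = qt a /\ lab e' = qs a.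
Hypothesis act_act : forall a b e e', act a e = Some e' -> act b e' = None.

Definition basis_E (v : qV Q) : 'M[K]_#|B| :=
  \matrix_(i, j) ((i == j) && (lab (enum_val i) == v))%:R.
Definition basis_X (a : qA Q) : 'M[K]_#|B| :=
  \matrix_(i, j) (act a (enum_val i) == Some (enum_val j))%:R.

Lemma brow_basis_E e v : brow e *m basis_E v = (lab e == v)%:R *: brow e.
Proof.
rewrite /brow -rowE; apply/rowP => j; rewrite !mxE enum_rankK eqxx /= eq_sym.
by case: (_ == enum_rank e); rewrite /= ?mulr1 ?mulr0.
Qed.

Lemma brow_basis_X e a : brow e *m basis_X a = if act a e is Some e' then brow e' else 0.
Proof.
rewrite /brow -rowE; apply/rowP => j; rewrite !mxE enum_rankK.
case: (act a e) => [e'|]; rewrite !mxE //=.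
by rewrite (inj_eq Some_inj) -(inj_eq enum_rank_inj) enum_valK eq_sym.
Qed.

Lemma basis_E_bcol e v : basis_E v *m bcol e = (lab e == v)%:R *: bcol e.
Proof.
rewrite /bcol -colE; apply/colP => j; rewrite !mxE eqxx andbT.
by have [->|nj] := eqVneq j (enum_rank e); rewrite ?enum_rankK /= ?mulr1 ?mulr0.
Qed.

Lemma basis_X_bcol e a : basis_X a *m bcol e = if coact a e is Some e' then bcol e' else 0.
Proof.
rewrite /bcol -colE; apply/colP => j; rewrite !mxE enum_rankK act_coact.
case: (coact a e) => [e'|]; rewrite !mxE //=.
by rewrite andbT (inj_eq Some_inj) -(inj_eq enum_rank_inj) enum_valK eq_sym.
Qed.

Lemma basis_E_mul v w : basis_E v *m basis_E w = if v == w then basis_E v else 0.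
Proof.
apply: basis_rowP => e; rewrite mulmxA brow_basis_E -scalemxAl brow_basis_E scalerA.
have [<-|vw] := eqVneq v w; first by rewrite brow_basis_E -natrM mulnb andbb.
rewrite mulmx0; have [ev|] := eqVneq (lab e) v; last by rewrite mul0r scale0r.
by rewrite -ev in vw; rewrite (negbTE vw) mulr0 scale0r.
Qed.

Lemma basis_E_sum : \sum_v basis_E v = 1%:M.
Proof.
apply: basis_rowP => e; rewrite mulmx_sumr mulmx1 (bigD1 (lab e)) //= big1 ?addr0.
  by rewrite brow_basis_E eqxx scale1r.
by move=> v ve; rewrite brow_basis_E eq_sym (negbTE ve) scale0r.
Qed.

Lemma basis_X_idem a : basis_X a = basis_E (qt a) *m basis_X a *m basis_E (qs a).
Proof.
apply: basis_rowP => e; rewrite !mulmxA brow_basis_E -!scalemxAl brow_basis_X.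
case ae: (act a e) => [e'|]; last by rewrite mul0mx scaler0.
by have [le le'] := act_lab ae; rewrite brow_basis_E le le' !eqxx !scale1r.
Qed.

Lemma basis_X_J2 a b : basis_X a *m basis_X b = 0.
Proof.
apply: basis_rowP => e; rewrite mulmxA brow_basis_X mulmx0.
case ae: (act a e) => [e'|]; last by rewrite mul0mx.
by rewrite brow_basis_X (act_act b ae).
Qed.

Definition basis_module : rmod Q K := RMod basis_E_mul basis_E_sum basis_X_idem basis_X_J2.

Lemma hom_from_basis (M : rmod Q K) (F : B -> 'rV[K]_(rdim M)) :
  (forall e v, F e *m rE M v = (lab e == v)%:R *: F e) ->
  (forall e a, F e *m rX M a = if act a e is Some e' then F e' else 0) ->
  is_hom (M := basis_module) (N := M) (rows_mx F).
Proof.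
move=> FE FX; split=> [v|a]; apply: basis_rowP => e; rewrite !mulmxA /=.
  by rewrite brow_basis_E -scalemxAl !brow_rows_mx FE.
by rewrite brow_basis_X !brow_rows_mx FX; case: (act a e) => [e'|]; rewrite ?brow_rows_mx ?mul0mx.
Qed.

Lemma hom_to_basis (M : rmod Q K) (G : B -> 'cV[K]_(rdim M)) :
  (forall e v, rE M v *m G e = (lab e == v)%:R *: G e) ->
  (forall e a, rX M a *m G e = if coact a e is Some e' then G e' else 0) ->
  is_hom (M := M) (N := basis_module) (cols_mx G).
Proof.
move=> EG XG; split=> [v|a]; apply: basis_colP => e; rewrite -!mulmxA /=.
  by rewrite basis_E_bcol -scalemxAr !cols_mx_bcol EG.
by rewrite basis_X_bcol !cols_mx_bcol XG; case: (coact a e) => [e'|]; rewrite ?cols_mx_bcol ?mulmx0.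
Qed.

End BasisModule.

Section StandardModules.
Variables (Q : quiver) (K : fieldType).
Implicit Types M : rmod Q K.

Section Simple.
Variable v : qV Q.

Definition simple_module : rmod Q K :=
  @basis_module Q K unit (fun=> v) (fun _ _ => None)
    (fun _ _ _ => ltac:(by [])) (fun _ _ _ _ => ltac:(by [])).

Lemma iso_simple M (x : 'rV[K]_(rdim M)) :
  indecomposable M -> (forall a, rX M a = 0) -> x *m rE M v = x -> x != 0 ->
  iso M simple_module.
Proof.
move=> Mi X0 xv x0.
have /separating_functional [psi [_ xpsi]] : ~~ (x <= (0 : 'M_(rdim M)))%MS.
  by rewrite submx0.
have vpsi : rE M v *m (rE M v *m psi) = rE M v *m psi by rewrite mulmxA rE_idem.
apply: (@indecomposable_retract_iso _ _ M simple_module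
  (cols_mx (fun _ : unit => rE M v *m psi)) (rows_mx (fun _ : unit => x))) => //.
- by rewrite /= card_unit.
- apply: (hom_to_basis (coact := fun _ _ => None)) => // [e w|e a].
    exact: col_rE_at vpsi.
  by rewrite X0 mul0mx.
- apply: hom_from_basis => [e w|e a]; first exact: row_rE_at.
  by rewrite X0 mulmx0.
- by apply: rows_mx_mul_cols_mx => [[] []]; rewrite mulmxA xv xpsi.
Qed.

End Simple.

(* [P(u) = e_u Lambda]: [None] is [e_u], lying at [u], and [Some b] is the
   arrow [b] ending at [u], lying at [s b]. *)
Section Projective.
Variable u : qV Q.

Definition proj_basis : finType := option {b : qA Q | qt b == u}.
Definition proj_lab (e : proj_basis) := if e is Some b then qs (val b) else u.
Definition proj_act (a : qA Q) (e : proj_basis) : option proj_basis :=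
  if e is None then omap Some (insub a) else None.
Definition proj_coact (a : qA Q) (e : proj_basis) : option proj_basis :=
  if e is Some b then (if val b == a then Some None else None) else None.

Lemma proj_act_coact a e e' : (proj_act a e == Some e') = (proj_coact a e' == Some e).
Proof.
case: e e' => [b|] [b'|] //=; first by case: (_ == a).
- case: insubP => [b0 _ <-|nPa] /=.
    by rewrite !(inj_eq Some_inj) val_eqE eq_sym; case: (_ == _).
  by have [b'a|] := eqVneq (val b') a; rewrite // -b'a (valP b') in nPa.
- by case: insub.
Qed.

Lemma proj_act_lab a e e' : proj_act a e = Some e' -> proj_lab e = qt a /\ proj_lab e' = qs a.
Proof.
case: e => [//|] /=; case: insubP => [b _ <-|//] [<-] /=.
by split=> //; apply/esym/eqP/(valP b).
Qed.

Lemma proj_act_act a b e e' : proj_act a e = Some e' -> proj_act b e' = None.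
Proof. by case: e => [//|] /=; case: insub => [b'|] // [<-]. Qed.

Definition proj_module : rmod Q K := basis_module K proj_act_lab proj_act_act.

Lemma proj_basis_X (v : 'rV[K]_#|proj_basis|) (b : {b : qA Q | qt b == u}) :
  v *m basis_X K proj_act (val b) = (v *m bcol None) *m brow (Some b).
Proof.
rewrite {1}(row_expand_basis v) mulmx_suml (bigD1 None) //= big1 => [|e].
  by rewrite -mulmxA brow_basis_X /= valK addr0.
by case: e => // b' _; rewrite -mulmxA brow_basis_X mulmx0.
Qed.

Lemma brow_None_proj_X (b : {b : qA Q | qt b == u}) :
  brow None *m basis_X K proj_act (val b) = brow (Some b).
Proof. by rewrite brow_basis_X /= valK. Qed.

Lemma hom_from_proj M (x : 'rV[K]_(rdim M)) : x *m rE M u = x ->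
  is_hom (M := proj_module) (N := M)
    (rows_mx (fun e : proj_basis => if e is Some b then x *m rX M (val b) else x)).
Proof.
move=> xu; apply: hom_from_basis => [[b|] v|[b|] a] /=.
- by rewrite -mulmxA rX_rE -scalemxAr.
- exact: row_rE_at.
- by rewrite -mulmxA rX_J2 mulmx0.
- case: insubP => [b _ <-|ua] //=.
  by rewrite -xu -mulmxA rE_rX (negbTE ua) scale0r mulmx0.
Qed.

Lemma proj_hom_eq M (f f' : 'M[K]_(#|proj_basis|, rdim M)) :
  is_hom (M := proj_module) f -> is_hom (M := proj_module) f' ->
  brow None *m f = brow None *m f' -> f = f'.
Proof.
move=> [_ fX] [_ f'X] ff'; apply: basis_rowP => [[b|]] //.
by rewrite -brow_None_proj_X -!mulmxA fX f'X !mulmxA ff'.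
Qed.

Lemma proj_module_projective : projective_mod proj_module.
Proof.
move=> B C g f hg g_full hf; have [G Gg] := row_fullP g_full.
set z := brow None *m f.
have zu : z *m rE C u = z.
  by rewrite -mulmxA -hf.1 mulmxA brow_basis_E eqxx scale1r.
set b := z *m G *m rE B u.
have bu : b *m rE B u = b by rewrite -mulmxA rE_idem.
exists (rows_mx (fun e : proj_basis => if e is Some c then b *m rX B (val c) else b)).
split; first exact: hom_from_proj.
apply: proj_hom_eq => //; first exact: hom_mul (hom_from_proj bu) hg.
by rewrite mulmxA brow_rows_mx -mulmxA hg.1 !mulmxA -(mulmxA z) Gg mulmx1 zu.
Qed.

Lemma hom_to_proj M (phi : 'cV[K]_(rdim M)) (lam : qA Q -> 'cV[K]_(rdim M)) :
  rE M u *m phi = phi -> (forall c, rX M c *m phi = 0) ->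
  (forall b, qt b = u -> rE M (qs b) *m lam b = lam b) ->
  (forall b c, qt b = u -> rX M c *m lam b = (c == b)%:R *: phi) ->
  is_hom (M := M) (N := proj_module)
    (cols_mx (fun e : proj_basis => if e is Some b then lam (val b) else phi)).
Proof.
move=> phiu Xphi lamE lamX.
apply: (hom_to_basis (coact := proj_coact) proj_act_coact) => [[b|] v|[b|] c] /=.
- by apply: col_rE_at; apply: lamE; apply/eqP; apply: (valP b).
- exact: col_rE_at.
- rewrite lamX; last by apply/eqP; apply: (valP b).
  by rewrite eq_sym; case: (_ == _); rewrite ?scale1r ?scale0r.
- exact: Xphi.
Qed.

Lemma row_full_hom_to_proj M (g : 'M[K]_(rdim M, #|proj_basis|)) (x : 'rV[K]_(rdim M)) :
  is_hom (N := proj_module) g -> x *m g *m bcol None != 0 -> row_full g.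
Proof.
move=> [_ gX] top0; set v := x *m g in top0.
have radv b : (brow (Some b) <= g)%MS.
  rewrite -(mx11_mul_submx _ _ top0) -proj_basis_X /v -mulmxA.
  by rewrite -gX mulmxA submxMl.
apply: row_full_basis => [[b|]]; first exact: radv.
have := row_expand_basis v; rewrite (bigD1 None) //=; set rad := \sum_(e | _) _ => vE.
rewrite -(mx11_mul_submx _ _ top0) (_ : _ *m brow None = v - rad); last by rewrite {2}vE addrK.
rewrite addmx_sub ?submxMl // eqmx_opp summx_sub // => -[b|//] _.
exact: submx_trans (submxMl _ _) (radv b).
Qed.

(* [phi] and the [lam b] are the coordinates of a homomorphism [M -> P(u)]. *)
Lemma iso_proj M (x : 'rV[K]_(rdim M)) (phi : 'cV[K]_(rdim M)) (lam : qA Q -> 'cV[K]_(rdim M)) :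
  indecomposable M -> rE M u *m phi = phi -> x *m phi = 1%:M ->
  (forall c, rX M c *m phi = 0) ->
  (forall b, qt b = u -> rE M (qs b) *m lam b = lam b) ->
  (forall b c, qt b = u -> rX M c *m lam b = (c == b)%:R *: phi) ->
  iso M proj_module.
Proof.
move=> Mi phiu xphi Xphi lamE lamX.
have hg := hom_to_proj phiu Xphi lamE lamX.
have g_full : row_full (cols_mx (fun e : proj_basis => if e is Some b then lam (val b) else phi)).
  apply: (row_full_hom_to_proj (x := x) hg).
  by rewrite -mulmxA cols_mx_bcol xphi -mxrank_eq0 mxrank1.
have [h [hh hg1]] := proj_module_projective hg g_full (hom_one _).
by apply: (indecomposable_retract_iso Mi _ hg hh hg1); apply/card_gt0P; exists None.
Qed.

End Projective.

(* [I(w)], the dual of [Lambda e_w]: [None] spans the socle, lying at [w], and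
   [Some c], for an arrow [c] starting at [w], lies at [t c] and is mapped
   onto the socle by [c]. *)
Section Injective.
Variable w : qV Q.

Definition inj_basis : finType := option {c : qA Q | qs c == w}.
Definition inj_lab (e : inj_basis) := if e is Some c then qt (val c) else w.
Definition inj_act (a : qA Q) (e : inj_basis) : option inj_basis :=
  if e is Some c then (if val c == a then Some None else None) else None.
Definition inj_coact (a : qA Q) (e : inj_basis) : option inj_basis :=
  if e is None then omap Some (insub a) else None.

Lemma inj_act_coact a e e' : (inj_act a e == Some e') = (inj_coact a e' == Some e).
Proof.
case: e e' => [c|] [c'|] //=; first by case: (_ == a).
- case: insubP => [c0 _ <-|nPa] /=.
    by rewrite !(inj_eq Some_inj); apply/esym; rewrite val_eqE eq_sym; case: (_ == _).
  by have [ca|] := eqVneq (val c) a; rewrite // -ca (valP c) in nPa.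
- by case: insub.
Qed.

Lemma inj_act_lab a e e' : inj_act a e = Some e' -> inj_lab e = qt a /\ inj_lab e' = qs a.
Proof.
case: e => [c|//] /=; case: eqP => [<-|//] [<-] /=.
by split=> //; apply/esym/eqP/(valP c).
Qed.

Lemma inj_act_act a b e e' : inj_act a e = Some e' -> inj_act b e' = None.
Proof. by case: e => [c|//] /=; case: (_ == a) => // -[<-]. Qed.

Definition inj_module : rmod Q K := basis_module K inj_act_lab inj_act_act.

Lemma inj_X_bcol_None (c : {c : qA Q | qs c == w}) :
  basis_X K inj_act (val c) *m bcol None = bcol (Some c).
Proof. by rewrite (basis_X_bcol _ inj_act_coact) /= valK. Qed.

Lemma inj_basis_X (v : 'rV[K]_#|inj_basis|) (c : {c : qA Q | qs c == w}) :
  v *m basis_X K inj_act (val c) = (v *m bcol (Some c)) *m brow None.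
Proof.
rewrite {1}(row_expand_basis v) mulmx_suml (bigD1 (Some c)) //= big1 => [|e].
  by rewrite -mulmxA brow_basis_X /= eqxx addr0.
case: e => [c' c'c|_]; rewrite -mulmxA brow_basis_X /= ?mulmx0 //.
suff /negbTE -> : val c' != val c by rewrite mulmx0.
by apply: contra c'c => /eqP/val_inj ->.
Qed.

Lemma hom_to_inj M (psi : 'cV[K]_(rdim M)) : rE M w *m psi = psi ->
  is_hom (M := M) (N := inj_module)
    (cols_mx (fun e : inj_basis => if e is Some c then rX M (val c) *m psi else psi)).
Proof.
move=> wpsi; apply: (hom_to_basis (coact := inj_coact) inj_act_coact) => [[c|] v|[c|] a] /=.
- by rewrite mulmxA rE_rX -scalemxAl.
- exact: col_rE_at.
- by rewrite mulmxA rX_J2 mul0mx.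
- case: insubP => [c _ <-|wa] //=.
  by rewrite -wpsi mulmxA rX_rE (negbTE wa) scale0r mul0mx.
Qed.

Lemma inj_hom_eq M (f f' : 'M[K]_(rdim M, #|inj_basis|)) :
  is_hom (N := inj_module) f -> is_hom (N := inj_module) f' ->
  f *m bcol None = f' *m bcol None -> f = f'.
Proof.
move=> [_ fX] [_ f'X] ff'; apply: basis_colP => [[c|]] //.
by rewrite -inj_X_bcol_None !mulmxA -fX -f'X -!mulmxA ff'.
Qed.

Lemma inj_module_injective : injective_mod inj_module.
Proof.
move=> B C i f hi i_free hf; have [J iJ] := row_freeP i_free.
set z := f *m bcol None.
have wz : rE B w *m z = z.
  by rewrite mulmxA hf.1 -mulmxA basis_E_bcol eqxx scale1r.
set psi := rE C w *m (J *m z).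
have wpsi : rE C w *m psi = psi by rewrite mulmxA rE_idem.
exists (cols_mx (fun e : inj_basis => if e is Some c then rX C (val c) *m psi else psi)).
split; first exact: hom_to_inj.
apply: inj_hom_eq => //; first exact: hom_mul hi (hom_to_inj wpsi).
by rewrite -mulmxA cols_mx_bcol mulmxA -hi.1 -mulmxA (mulmxA i) iJ mul1mx wz.
Qed.

Lemma hom_from_inj M (y : 'rV[K]_(rdim M)) (xs : qA Q -> 'rV[K]_(rdim M)) :
  y *m rE M w = y -> (forall d, y *m rX M d = 0) ->
  (forall c, qs c = w -> xs c *m rE M (qt c) = xs c) ->
  (forall c d, qs c = w -> xs c *m rX M d = (d == c)%:R *: y) ->
  is_hom (M := inj_module) (N := M)
    (rows_mx (fun e : inj_basis => if e is Some c then xs (val c) else y)).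
Proof.
move=> yw yX xsE xsX; apply: hom_from_basis => [[c|] v|[c|] d] /=.
- by apply: row_rE_at; apply: xsE; apply/eqP; apply: (valP c).
- exact: row_rE_at.
- rewrite xsX; last by apply/eqP; apply: (valP c).
  by rewrite eq_sym; case: (_ == _); rewrite ?scale1r ?scale0r.
- exact: yX.
Qed.

Lemma row_free_hom_from_inj M (f : 'M[K]_(#|inj_basis|, rdim M)) :
  is_hom (M := inj_module) f -> brow None *m f != 0 -> row_free f.
Proof.
move=> [_ fX] soc0; apply: inj_row_free => v vf0.
have coord0 c : v *m bcol (Some c) = 0.
  apply/eqP; rewrite -(mx11_mul_eq0 _ soc0) mulmxA -inj_basis_X -mulmxA.
  by rewrite fX mulmxA vf0 mul0mx.
have vE : v = (v *m bcol None) *m brow None.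
  rewrite {1}(row_expand_basis v) (bigD1 None) //= big1 ?addr0 // => -[c|//] _.
  by rewrite coord0 mul0mx.
have : (v *m bcol None) *m (brow None *m f) == 0 by rewrite mulmxA -vE vf0.
by rewrite mx11_mul_eq0 // => /eqP c0; rewrite vE c0 mul0mx.
Qed.

(* [y] and the [xs c] are the images of the basis of [I(w)] under a
   homomorphism [I(w) -> M]. *)
Lemma iso_inj M (y : 'rV[K]_(rdim M)) (xs : qA Q -> 'rV[K]_(rdim M)) :
  indecomposable M -> y *m rE M w = y -> y != 0 -> (forall d, y *m rX M d = 0) ->
  (forall c, qs c = w -> xs c *m rE M (qt c) = xs c) ->
  (forall c d, qs c = w -> xs c *m rX M d = (d == c)%:R *: y) ->
  iso M inj_module.
Proof.
move=> Mi yw y0 yX xsE xsX.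
have hf := hom_from_inj yw yX xsE xsX.
have f_free : row_free (rows_mx (fun e : inj_basis => if e is Some c then xs (val c) else y)).
  by apply: row_free_hom_from_inj hf _; rewrite brow_rows_mx.
have [h [hh fh]] := inj_module_injective hf f_free (hom_one _).
by apply: (indecomposable_retract_iso Mi _ hh hf fh); apply/card_gt0P; exists None.
Qed.

End Injective.

End StandardModules.

Section QuiverDegrees.
Variable Q : quiver.
Implicit Types (a b c : qA Q) (v : qV Q).

Lemma in_arrow_unique v a c : (indeg v <= 1)%N -> qt a = v -> qt c = v -> c = a.
Proof. by move=> /card_le1_eqP le1 av cv; apply: le1; rewrite inE; apply/eqP. Qed.

Lemma out_arrow_unique v a c : (outdeg v <= 1)%N -> qs a = v -> qs c = v -> c = a.
Proof. by move=> /card_le1_eqP le1 av cv; apply: le1; rewrite inE; apply/eqP. Qed.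

Lemma in_arrows_two v a b c : (indeg v <= 2)%N -> qt a = v -> qt b = v -> b != a ->
  qt c = v -> c = a \/ c = b.
Proof.
move=> le2 av bv ba cv; have [->|ca] := eqVneq c a; [by left | right].
apply/eqP; apply: contraTT le2 => cb; rewrite -ltnNge; apply/card_gt2P.
by exists b, a, c; rewrite !inE av bv cv eqxx ba [a == c]eq_sym ca cb.
Qed.

Lemma out_arrows_two v a b c : (outdeg v <= 2)%N -> qs a = v -> qs b = v -> b != a ->
  qs c = v -> c = a \/ c = b.
Proof.
move=> le2 av bv ba cv; have [->|ca] := eqVneq c a; [by left | right].
apply/eqP; apply: contraTT le2 => cb; rewrite -ltnNge; apply/card_gt2P.
by exists b, a, c; rewrite !inE av bv cv eqxx ba [a == c]eq_sym ca cb.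
Qed.

Lemma indeg_gt1 a b : qt b = qt a -> b != a -> (1 < indeg (qt a))%N.
Proof. by move=> ba ab; apply/card_gt1P; exists a, b; rewrite !inE ba eqxx eq_sym. Qed.

Lemma outdeg_gt1 a b : qs b = qs a -> b != a -> (1 < outdeg (qs a))%N.
Proof. by move=> ba ab; apply/card_gt1P; exists a, b; rewrite !inE ba eqxx eq_sym. Qed.

End QuiverDegrees.

Section PreAdmissible.
Variables (Q : quiver) (n : nat).
Hypothesis HQ : pre_admissible Q n.
Implicit Types (c : qA Q) (v : qV Q).

Lemma pre_admissible_deg_le2 v : (indeg v <= 2)%N /\ (outdeg v <= 2)%N.
Proof.
have small : all (fun p => (p.1 <= 2) && (p.2 <= 2))%N
  [:: (0,0); (0,1); (1,0); (1,1); (1,2); (2,1)]%N by [].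
case: HQ => degs _ _; case: (degs v) => [/(allP small)/andP []|[_ [-> ->]]] //.
Qed.

Lemma outdeg_src_le1 c : (1 < indeg (qt c))%N -> (outdeg (qs c) <= 1)%N.
Proof. by case: HQ => _ _ /(_ c); lia. Qed.

Lemma indeg_tgt_le1 c : (1 < outdeg (qs c))%N -> (indeg (qt c) <= 1)%N.
Proof. by case: HQ => _ _ /(_ c); lia. Qed.

Lemma not_in2_out2 (a b c : qA Q) : qt a = qt b -> a != b -> qs b = qs c -> b != c -> False.
Proof.
move=> ab_t ab bc_s bc; have := outdeg_src_le1 (indeg_gt1 ab_t ab).
by rewrite leqNgt (outdeg_gt1 (esym bc_s)) // eq_sym.
Qed.

End PreAdmissible.

Definition standard_module (Q : quiver) (K : fieldType) (t : qV Q + (qV Q + qV Q)) :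
  rmod Q K :=
  match t with
  | inl v => simple_module K v
  | inr (inl u) => proj_module K u
  | inr (inr w) => inj_module K w
  end.

Section Classification.
Variables (Q : quiver) (n : nat) (K : fieldType).
Hypothesis HQ : pre_admissible Q n.
Variable M : rmod Q K.
Hypothesis Mi : indecomposable M.
Local Notation E := (rE M).
Local Notation X := (rX M).

Section ActiveArrow.
Variables (a : qA Q) (x : 'rV[K]_(rdim M)).
Hypotheses (xu : x *m E (qt a) = x) (xa0 : x *m X a != 0).
Local Notation u := (qt a).
Local Notation w := (qs a).
Local Notation y := (x *m X a).

Lemma iso_inj_of_two_in_ker b : qt b = u -> b != a ->
  (x <= kermx (X a) + kermx (X b))%MS -> iso M (inj_module K w).
Proof.
move=> bu ba /sub_addsmxP [[ka kb] /= xk].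
set x' := kb *m kermx (X b) *m E u.
have out_a c : qs c = w -> c = a.
  exact: out_arrow_unique (outdeg_src_le1 HQ (indeg_gt1 bu ba)) _.
apply: (iso_inj (y := y) (xs := fun=> x')) => // [|||c d /out_a ->].
- exact: row_rX_at_src.
- exact: row_rX_rX.
- by move=> c /out_a ->; rewrite -mulmxA rE_idem.
rewrite (row_at_rX d (_ : x' *m E u = x')); last by rewrite -mulmxA rE_idem.
have [du|du] := eqVneq (qt d) u; last first.
  by rewrite scale0r (_ : (d == a) = false) ?scale0r //; apply: contraNF du => /eqP ->.
rewrite scale1r /x' -mulmxA.
have [->|->] := in_arrows_two (pre_admissible_deg_le2 HQ u).1 erefl bu ba du.
  by rewrite eqxx scale1r rE_tgt_rX xk mulmxDl -(mulmxA ka) mulmx_ker mulmx0 add0r.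
by rewrite (negbTE ba) scale0r -bu rE_tgt_rX -mulmxA mulmx_ker mulmx0.
Qed.

Lemma iso_proj_of_two_in b : qt b = u -> b != a ->
  ~~ (x <= kermx (X a) + kermx (X b))%MS -> iso M (proj_module K u).
Proof.
set S := (kermx (X a) + kermx (X b))%MS => bu ba /separating_functional [phi0 [Sphi0 xphi0]].
have in_ab c : qt c = u -> c = a \/ c = b.
  exact: in_arrows_two (pre_admissible_deg_le2 HQ u).1 erefl bu ba.
have killS m (A : 'M_(m, rdim M)) : (A <= S)%MS -> A *m phi0 = 0.
  by case/submxP => D ->; rewrite -mulmxA Sphi0 mulmx0.
have ker_S c : qt c = u -> (kermx (X c) <= S)%MS.
  by case/in_ab => ->; [exact: addsmxSl | exact: addsmxSr].
set phi := E u *m phi0.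
(* [phi] vanishes on the kernels of both arrows ending at [u], hence factors
   through each of them. *)
have solvable c : qt c = u -> exists l, X c *m l = phi.
  move=> cu; apply: col_solvable => m mc; rewrite mulmxA killS //.
  by apply: submx_trans (ker_S c cu); apply/sub_kermxP; rewrite -mulmxA -cu rE_tgt_rX.
have [[la la_a] [lb lb_b]] := (solvable a erefl, solvable b bu).
have out1 c c' : qt c = u -> qs c' = qs c -> c' = c.
  move=> cu; apply: out_arrow_unique erefl.
  by apply: (outdeg_src_le1 HQ); rewrite cu; apply: indeg_gt1 bu ba.
apply: (iso_proj (x := x) (phi := phi) (lam := fun c => E (qs c) *m if c == a then la else lb)).
- exact: Mi.
- by rewrite /phi mulmxA rE_idem.
- by rewrite /phi mulmxA xu.
- move=> c; rewrite /phi mulmxA killS //; apply: submx_trans (addsmxSl _ _).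
  by apply/sub_kermxP; rewrite -mulmxA rE_tgt_rX rX_J2.
- by move=> c _; rewrite mulmxA rE_idem.
move=> c c' cu; rewrite mulmxA rX_rE.
have [/(out1 c c' cu) ->|] := eqVneq (qs c') (qs c); last first.
  move=> nc; rewrite scale0r mul0mx (_ : (c' == c) = false) ?scale0r //.
  by apply: contraNF nc => /eqP ->.
rewrite eqxx !scale1r; case/in_ab: cu => ->; first by rewrite eqxx.
by rewrite (negbTE ba).
Qed.

Lemma iso_inj_of_overlap c : (forall b, qt b = u -> b = a) -> qs c = w -> c != a ->
  (y <= X c)%MS -> iso M (inj_module K w).
Proof.
move=> in_a cw ca /submxP [m ym].
set xc := m *m E (qt c).
have xcE : xc *m E (qt c) = xc by rewrite -mulmxA rE_idem.
have in_c b : qt b = qt c -> b = c.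
  apply: in_arrow_unique erefl; apply: (indeg_tgt_le1 HQ).
  by rewrite cw; apply: outdeg_gt1 cw ca.
have out_ac d : qs d = w -> d = a \/ d = c.
  exact: out_arrows_two (pre_admissible_deg_le2 HQ w).2 erefl cw ca.
apply: (iso_inj (y := y) (xs := fun d => if d == a then x else xc)) => //.
- exact: row_rX_at_src.
- exact: row_rX_rX.
- by move=> d /out_ac [->|->]; rewrite ?eqxx ?(negbTE ca).
move=> d d' /out_ac [->|->]; rewrite ?eqxx ?(negbTE ca); first exact: row_at_rX_unique xu in_a.
by rewrite (row_at_rX_unique d' xcE in_c) -mulmxA rE_tgt_rX -ym.
Qed.

Lemma iso_proj_of_one_in : (forall b, qt b = u -> b = a) ->
  (forall c, qs c = w -> c != a -> ~~ (y <= X c)%MS) -> iso M (proj_module K u).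
Proof.
move=> in_a no_overlap.
have [psi [psiX ypsi]] : exists psi,
    (forall c, qs c = w -> c != a -> X c *m psi = 0) /\ y *m psi = 1%:M.
  case: (pickP (fun c => (qs c == w) && (c != a))) => [c /andP [/eqP cw ca]|none].
    have [psi [cpsi ypsi]] := separating_functional (no_overlap c cw ca).
    exists psi; split=> // c' c'w c'a.
    by case: (out_arrows_two (pre_admissible_deg_le2 HQ w).2 erefl cw ca c'w) c'a => ->;
      rewrite ?eqxx.
  have /separating_functional [psi [_ ypsi]] : ~~ (y <= (0 : 'M_(rdim M)))%MS.
    by rewrite submx0.
  by exists psi; split=> // c cw ca; move: (none c); rewrite cw eqxx ca.
apply: (iso_proj (x := x) (phi := X a *m psi) (lam := fun=> E w *m psi)) => //.
- by rewrite mulmxA rE_tgt_rX.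
- by rewrite mulmxA.
- by move=> c; rewrite mulmxA rX_J2 mul0mx.
- by move=> b /in_a ->; rewrite mulmxA rE_idem.
move=> b c /in_a ->; rewrite mulmxA rX_rE.
have [cw|] := eqVneq (qs c) w; last first.
  move=> nc; rewrite scale0r mul0mx (_ : (c == a) = false) ?scale0r //.
  by apply: contraNF nc => /eqP ->.
rewrite scale1r; have [->|ca] := eqVneq c a; first by rewrite scale1r.
by rewrite scale0r psiX.
Qed.

End ActiveArrow.

Lemma classify_indecomposable : exists t, iso M (standard_module K t).
Proof.
have [a Xa|X0] := pickP (fun a => X a != 0); last first.
  have [v Ev|E0] := pickP (fun v => E v != 0); last first.
    case: Mi => M_gt0 _; have := rE_sum M; rewrite big1 => [/esym/eqP|v _]; last first.
      exact/eqP/negbFE/E0.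
    by rewrite -mxrank_eq0 mxrank1 (gtn_eqF M_gt0).
  have /rowV0Pn [z /submxP [D ->] z0] := Ev.
  exists (inl v); apply: (iso_simple (x := D *m E v)) => //.
  - by move=> a; apply/eqP/negbFE/X0.
  - by rewrite -mulmxA rE_idem.
have /rowV0Pn [z /submxP [D zD] z0] := Xa.
set x := D *m E (qt a).
have xu : x *m E (qt a) = x by rewrite -mulmxA rE_idem.
have xa0 : x *m X a != 0 by rewrite -mulmxA rE_tgt_rX -zD.
have [b /andP [/eqP bu ba]|one_in] := pickP (fun b => (qt b == qt a) && (b != a)).
  have [ker|nker] := boolP (x <= kermx (X a) + kermx (X b))%MS.
    by exists (inr (inr (qs a))); apply: (iso_inj_of_two_in_ker xa0 bu ba ker).
  by exists (inr (inl (qt a))); apply: (iso_proj_of_two_in xu bu ba nker).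
have in_a b : qt b = qt a -> b = a.
  by move=> bu; apply/eqP; apply: contraFT (one_in b) => ba; rewrite bu eqxx.
have [c /and3P [/eqP cw ca yc]|none] :=
  pickP (fun c => [&& qs c == qs a, c != a & (x *m X a <= X c)%MS]).
  by exists (inr (inr (qs a))); apply: (iso_inj_of_overlap xu xa0 in_a cw ca yc).
exists (inr (inl (qt a))); apply: (iso_proj_of_one_in xa0 in_a) => c cw ca.
by move: (none c); rewrite cw eqxx ca /= => ->.
Qed.

End Classification.

Section Strings.
Variables (Q : quiver) (n : nat).
Hypothesis HQ : pre_admissible Q n.

Lemma J2_string_algebra : string_algebra (@J2 Q).
Proof.
split=> [p q r _|v|a|a]; first by rewrite /J2 !size_cat; lia.
- exact: pre_admissible_deg_le2 HQ v.
- by rewrite eq_card0 // => b; rewrite !inE /J2 /= andbF.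
- by rewrite eq_card0 // => b; rewrite !inE /J2 /= andbF.
Qed.

Lemma J2_string_size_le2 (w : seq (letter Q)) : is_string (@J2 Q) w -> (size w <= 2)%N.
Proof.
case=> _; case: w => [|[a da] [|[b db] [|[c dc] t]]] //= /and3P [/eqP e1 /eqP e2 _].
move=> /and3P [n1 n2 _] noJ2.
move: (noJ2 0%N 1%N isT) (noJ2 1%N 1%N isT) => {noJ2}; rewrite /= take0 /J2 /=.
case: da db dc e1 e2 n1 n2 => [] [] [] //= e1 e2;
  rewrite !xpair_eqE ?eqxx ?andbT => n1 n2;
  try (by case=> /(_ isT)); try (by case=> _ /(_ isT));
  try (by move=> _; case=> /(_ isT)); try (by move=> _; case=> _ /(_ isT)).
  by case: (not_in2_out2 HQ e1 n1 e2 n2).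
by rewrite eq_sym in n1; rewrite eq_sym in n2; case: (not_in2_out2 HQ (esym e2) n2 (esym e1) n1).
Qed.

Lemma J2_no_band (w : seq (letter Q)) : ~ is_band (@J2 Q) w.
Proof.
case=> _ _ /(_ 2%N isT) ww _; move: ww (J2_string_size_le2 ww).
rewrite /= cats0 size_cat; case: w => [[/(_ erefl)]|x [|y t] []] //=; last by lia.
move=> _ _ _ /(_ 0%N 1%N isT) + _; rewrite /J2 /=.
by case: x => a [] [noJ2 noJ2']; [move: (noJ2 isT) | move: (noJ2' isT)].
Qed.

End Strings.

Theorem theorem2p10 (n : nat) (Q : quiver) (K : fieldType) :
  (2 <= n)%N -> connected_quiver Q -> pre_admissible Q n ->
  [/\ string_algebra (@J2 Q),
      (forall w : seq (letter Q), is_string (@J2 Q) w -> (size w <= 2)%N)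
        /\ (forall w : seq (letter Q), ~ is_band (@J2 Q) w),
      rep_finite Q K &
      forall M : rmod Q K, indecomposable M -> ~ simple_mod M ->
        projective_mod M \/ injective_mod M].
Proof.
move=> _ _ HQ; split.
- exact: J2_string_algebra HQ.
- by split; [exact: J2_string_size_le2 HQ | exact: J2_no_band HQ].
- exists #|{: qV Q + (qV Q + qV Q)}|, (fun i => standard_module K (enum_val i)).
  move=> M Mi; have [t Mt] := classify_indecomposable HQ Mi.
  by exists (enum_rank t); rewrite enum_rankK.
- move=> M Mi M_nsimple; have [[v|[u|w]] Mt] := classify_indecomposable HQ Mi.
  + by case: M_nsimple; apply: rdim1_simple; rewrite (iso_rdim Mt) /= card_unit.
  + by left; apply: (iso_projective Mt); apply: proj_module_projective.
  + by right; apply: (iso_injective Mt); apply: inj_module_injective.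
Qed.
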